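(* Let $D$ be a Dyck path of semilength $n$ and $\pi$ the permutation associated with $D$ by the Billey–Jockusch–Stanley bijection. Then for $k\in\{1,\dots,n\}$, $\pi(k)=k$ if and only if $D$ has no valley at any position $(i,j)$ with $i\le k$ and $j\ge k$.
   Context: Work in an $n\times n$ array of unit cells; the cell $(i,j)$ is the one in column $i$ (columns numbered $1,\dots,n$ from left to right) and row $j$ (rows numbered $1,\dots,n$ from bottom to top), i.e. the square $[i-1,i]\times[j-1,j]$. A Dyck path of semilength $n$ is a lattice path from $(0,0)$ to $(n,n)$ with unit north and east steps that never goes below the line $y=x$. A valley of $D$ is an east step immediately followed by a north step; if the east step is the $k$-th east step and the north step is the $\ell$-th north step of $D$, the valley is said to be at position $(k,\ell)$, namely the cell enclosed by these two steps. Billey–Jockusch–Stanley bijection: put a cross in every valley cell of $D$; then, for the columns $i=1,2,\dots,n$ in this order, if column $i$ does not yet contain a cross, put a cross in the lowest cell of column $i$whose row does not yet contain a cross. The crosses form a permutation matrix, and $\pi(i)$ is the row of the cross in column $i$. *)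

From mathcomp Require Import all_boot.
Set Implicit Arguments. Unset Strict Implicit. Unset Printing Implicit Defensive.

(* A lattice path is a sequence of steps: true = north step, false = east step. *)

Definition dyck (n : nat) (D : seq bool) : bool :=
  [&& size D == n.*2, count id D == n &
      all (fun m => count negb (take m D) <= count id (take m D))
          (iota 0 (size D).+1)].

(* The valley is at position (k, l) where the east
   step is the k-th east step and the north step is the l-th north step. *)
Definition valleys (D : seq bool) : seq (nat * nat) :=
  [seq (count negb (take p.+1 D), count id (take p.+2 D))
  | p <- iota 0 (size D).-1
  & (nth true D p == false) && (nth false D p.+1 == true)].

(* Billey-Jockusch-Stanley construction, columns processed in order.
   V = valley cells, used = rows already containing a cross. *)
Fixpoint bjs_aux (n : nat) (V : seq (nat * nat)) (cols : seq nat)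
    (used : seq nat) : seq nat :=
  match cols with
  | [::] => [::]
  | i :: cs =>
      match [seq v.2 | v <- V & v.1 == i] with
      | r :: _ => r :: bjs_aux n V cs used
      | [::] =>
          let r := head 0 [seq r <- iota 1 n | r \notin used] in
          r :: bjs_aux n V cs (r :: used)
      end
  end.

Definition bjs (n : nat) (D : seq bool) : seq nat :=
  bjs_aux n (valleys D) (iota 1 n) (map snd (valleys D)).

Definition bjs_perm (n : nat) (D : seq bool) (k : nat) : nat :=
  nth 0 (bjs n D) k.-1.

From mathcomp Require Import all_boot zify.
Set Implicit Arguments. Unset Strict Implicit. Unset Printing Implicit Defensive.

(* A valley column is sent to the row of its valley, which lies strictly
   above it.  The greedy step then fills the remaining (free) columns with the
   remaining (free) rows in increasing order, so the t-th free column receives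
   the t-th free row.  Hence a free column k is fixed iff k is a free row and
   as many free columns as free rows lie below k.  Valleys lie strictly above
   the diagonal and no two of them share a row or a column, so these two
   counts differ exactly by the number of valleys (i, j) with i < k <= j. *)

Definition col_rows (V : seq (nat * nat)) (c : nat) : seq nat :=
  [seq v.2 | v <- V & v.1 == c].

Lemma mem_col_rows V c r : (r \in col_rows V c) = ((c, r) \in V).
Proof.
apply/mapP/idP => [[v] | cr]; last by exists (c, r); rewrite // mem_filter eqxx.
by rewrite mem_filter => /andP[/eqP <- vV] ->; rewrite -surjective_pairing.
Qed.

Lemma col_rows_nil V c : (col_rows V c == [::]) = (c \notin unzip1 V).
Proof.
by rewrite -size_eq0 size_map size_filter eqn0Ngt -has_count -has_pred1 has_map.
Qed.

Lemma filter_predC1_head (T : eqType) (x0 : T) s :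
  uniq s -> [seq x <- s | x != head x0 s] = behead s.
Proof.
case: s => [|x s] //= /andP[xs _]; rewrite eqxx; apply/all_filterP/allP => y ys.
by apply: contraNneq xs => <-.
Qed.

Lemma nth_bjs_aux n V (F : seq nat) cols used t i : uniq F ->
  [seq r <- iota 1 n | r \notin used] = drop t F -> i < size cols ->
  nth 0 (bjs_aux n V cols used) i =
  if col_rows V (nth 0 cols i) is r :: _ then r
  else nth 0 F (t + count (fun c => c \notin unzip1 V) (take i cols)).
Proof.
move=> uF; elim: cols used t i => [//|c cols IH] used t i free /=.
rewrite -/(col_rows V c); case Ec: (col_rows V c) => [|r rs]; last first.
  have cV : c \in unzip1 V by rewrite -[_ \in _]negbK -col_rows_nil Ec.
  by case: i => [|i] /= ltis; rewrite ?Ec // cV add0n (IH _ t).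
have cV : c \notin unzip1 V by rewrite -col_rows_nil Ec.
case: i => [|i] /= ltis; first by rewrite Ec free -nth0 nth_drop !addn0.
rewrite cV add1n -addSnnS free (IH _ t.+1) //.
set r := head 0 (drop t F).
have -> : [seq x <- iota 1 n | x \notin r :: used] =
          [seq x <- [seq x <- iota 1 n | x \notin used] | x != r].
  by rewrite -filter_predI; apply: eq_filter => x; rewrite /= in_cons negb_or.
by rewrite free filter_predC1_head ?drop_uniq // -drop1 drop_drop.
Qed.

Lemma nth_bjs n V k : 0 < k <= n ->
  nth 0 (bjs_aux n V (iota 1 n) (unzip2 V)) k.-1 =
  if col_rows V k is r :: _ then r
  else nth 0 [seq r <- iota 1 n | r \notin unzip2 V]
             (count (fun c => c \notin unzip1 V) (iota 1 k.-1)).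
Proof.
move=> /andP[k_gt0 le_kn].
rewrite (@nth_bjs_aux _ _ [seq r <- iota 1 n | r \notin unzip2 V] _ _ 0)
  ?filter_uniq ?iota_uniq ?drop0 ?size_iota //; last by lia.
by rewrite nth_iota ?take_iota ?add1n ?prednK ?(minn_idPl _) //; lia.
Qed.

Lemma index_filter_iota (p : pred nat) a m k : a <= k < a + m -> p k ->
  index k [seq x <- iota a m | p x] = count p (iota a (k - a)).
Proof.
move=> /andP[le_ak lt_k] pk.
have -> : iota a m = iota a (k - a) ++ iota k (m - (k - a)).
  by rewrite -{2}(subnKC le_ak) -iotaD subnKC //; lia.
rewrite -(@prednK (m - (k - a))); last by lia.
rewrite filter_cat index_cat mem_filter mem_iota size_filter /= subnKC //.
by rewrite ltnn andbF pk /= eqxx addn0.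
Qed.

Lemma nth_filter_iota_eq (p : pred nat) a m t k : 0 < k -> a <= k < a + m ->
  (nth 0 [seq x <- iota a m | p x] t == k) = p k && (t == count p (iota a (k - a))).
Proof.
move=> k_gt0 kam; set F := [seq x <- iota a m | p x].
have uF : uniq F by rewrite filter_uniq ?iota_uniq.
case: (boolP (p k)) => pk /=; last first.
  apply/eqP => Ek; case: (ltnP t (size F)) => tF.
    by have := mem_nth 0 tF; rewrite Ek mem_filter (negbTE pk).
  by move: k_gt0; rewrite -Ek nth_default.
rewrite -(index_filter_iota kam pk).
apply/eqP/eqP => [Ek|->]; last by rewrite nth_index // mem_filter pk mem_iota.
case: (ltnP t (size F)) => tF; first by rewrite -Ek index_uniq.
by move: k_gt0; rewrite -Ek nth_default.
Qed.

Lemma count_mem_sym (T : eqType) (s1 s2 : seq T) : uniq s1 -> uniq s2 ->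
  count (mem s1) s2 = count (mem s2) s1.
Proof.
move=> u1 u2; rewrite -!size_filter; apply/perm_size/uniq_perm; rewrite ?filter_uniq //.
by move=> x; rewrite !mem_filter andbC.
Qed.

Lemma count_notin_iota (s : seq nat) m : uniq s -> {in s, forall x, 0 < x} ->
  count (fun x => x \notin s) (iota 1 m) + count (fun x => x <= m) s = m.
Proof.
move=> us s_gt0; rewrite -[RHS](size_iota 1) -(count_predC (mem s)) addnC.
congr (_ + _); rewrite count_mem_sym ?iota_uniq //.
by apply: eq_in_count => x /s_gt0 x_gt0; rewrite /= mem_iota x_gt0 add1n ltnS.
Qed.

Lemma no_valley_across (V : seq (nat * nat)) k : 0 < k -> k \notin unzip1 V ->
  (forall i j, (i, j) \in V -> ~ (i <= k /\ k <= j)) <->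
  ~~ has (fun v => v.1 <= k.-1 < v.2) V.
Proof.
case: k => // k _ kC; split => [noV | /hasPn noV i j ij [ik kj]].
  by apply/hasPn => -[i j] ij /=; apply/negP => ?; apply: (noV i j ij); lia.
have /= := noV _ ij; case: (i =P k.+1) => [ik'|/eqP ne]; last by lia.
by move: kC; rewrite -ik' (map_f fst ij).
Qed.

Section ValleySets.

Variable V : seq (nat * nat).
Hypothesis col_lt_row : forall v, v \in V -> 0 < v.1 < v.2.

Lemma notin_rows_no_valley_across k :
  ~~ has (fun v => v.1 <= k.-1 < v.2) V -> k \notin unzip2 V.
Proof.
move=> /hasPn noV; apply/mapP => -[v vV kv]; have := noV v vV.
by have := col_lt_row vV; rewrite /= -kv; lia.
Qed.

Hypotheses (uniq_cols : uniq (unzip1 V)) (uniq_rows : uniq (unzip2 V)).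

Lemma free_cols_eq_free_rows m :
  (count (fun c => c \notin unzip1 V) (iota 1 m) ==
   count (fun r => r \notin unzip2 V) (iota 1 m)) =
  ~~ has (fun v => v.1 <= m < v.2) V.
Proof.
have cols : count (fun c => c \notin unzip1 V) (iota 1 m) +
            count (fun v => v.1 <= m) V = m.
  rewrite -(count_map fst (fun x => x <= m)); apply: count_notin_iota => //.
  by move=> _ /mapP[v /col_lt_row /andP[v1 _] ->].
have rows : count (fun r => r \notin unzip2 V) (iota 1 m) +
            count (fun v => v.2 <= m) V = m.
  rewrite -(count_map snd (fun x => x <= m)); apply: count_notin_iota => //.
  by move=> _ /mapP[v /col_lt_row /andP[v1 v2] ->]; exact: ltn_trans v1 v2.
have cross : count (fun v => v.2 <= m) V + count (fun v => v.1 <= m < v.2) V =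
             count (fun v => v.1 <= m) V.
  rewrite -[RHS]size_filter -(count_predC (fun v => v.2 <= m)) !count_filter.
  by congr (_ + _); apply: eq_in_count => v /col_lt_row /=; lia.
by rewrite has_count -leqNgt; apply/eqP/idP; lia.
Qed.

End ValleySets.

Definition valley_positions (D : seq bool) : seq nat :=
  [seq p <- iota 0 (size D).-1 |
     (nth true D p == false) && (nth false D p.+1 == true)].

Lemma valleysE D : valleys D =
  [seq (count negb (take p.+1 D), count id (take p.+2 D)) | p <- valley_positions D].
Proof. by []. Qed.

Lemma mem_valley_positions D p : p \in valley_positions D ->
  [/\ p.+1 < size D, nth true D p = false & nth false D p.+1 = true].
Proof.
by rewrite mem_filter mem_iota => /andP[/andP[/eqP-> /eqP->] ?]; split => //; lia.
Qed.

Lemma count_take_lt (a : pred bool) x0 (s : seq bool) p q :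
  p < q < size s -> a (nth x0 s q) -> count a (take p.+1 s) < count a (take q.+1 s).
Proof.
move=> /andP[pq qs] aq; rewrite (take_nth x0 qs) -cats1 count_cat /= aq addn1 ltnS.
by rewrite -(take_takel s pq) -{2}(cat_take_drop p.+1 (take q s)) count_cat leq_addr.
Qed.

Lemma uniq_map_valley_positions D (f : nat -> nat) :
  {in valley_positions D &, {homo f : p q / p < q}} ->
  uniq (map f (valley_positions D)).
Proof.
move=> f_homo; apply: (sorted_uniq ltn_trans ltnn).
apply: homo_sorted_in f_homo _ _ => //.
rewrite /valley_positions sorted_filter //; first exact: ltn_trans.
exact: iota_ltn_sorted.
Qed.

Lemma valleys_uniq_cols D : uniq (unzip1 (valleys D)).
Proof.
rewrite valleysE /unzip1 -map_comp.
apply: uniq_map_valley_positions => p q /mem_valley_positions[? ? _].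
move=> /mem_valley_positions[? east _] pq /=.
by apply: (@count_take_lt negb true); rewrite ?east //; lia.
Qed.

Lemma valleys_uniq_rows D : uniq (unzip2 (valleys D)).
Proof.
rewrite valleysE /unzip2 -map_comp.
apply: uniq_map_valley_positions => p q /mem_valley_positions[? _ _].
move=> /mem_valley_positions[? _ north] pq /=.
by apply: (@count_take_lt id false); rewrite ?north //; lia.
Qed.

Lemma valley_col_lt_row n D : dyck n D ->
  forall v, v \in valleys D -> 0 < v.1 < v.2.
Proof.
case/and3P => _ _ /allP prefix _ /mapP[p /mem_valley_positions[ps east north] ->] /=.
have ps' : p < size D by lia.
have col_gt0 : 0 < count negb (take p.+1 D).
  by rewrite (take_nth true ps') -cats1 count_cat east addn1.
have ballot : count negb (take p.+1 D) <= count id (take p.+1 D).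
  by apply: prefix; rewrite mem_iota; lia.
have north_step : count id (take p.+1 D) < count id (take p.+2 D).
  by rewrite (take_nth false ps) -cats1 count_cat north addn1.
by rewrite col_gt0 (leq_ltn_trans ballot north_step).
Qed.

Theorem mainTheorem2 (n : nat) (D : seq bool) (hD : dyck n D) (k : nat)
    (hk1 : 1 <= k) (hkn : k <= n) :
  bjs_perm n D k = k <->
  (forall i j : nat, (i, j) \in valleys D -> ~ (i <= k /\ k <= j)).
Proof.
have uC := valleys_uniq_cols D; have uR := valleys_uniq_rows D.
have col_lt_row := valley_col_lt_row hD.
rewrite /bjs_perm /bjs nth_bjs ?hk1 //.
case Ek: (col_rows (valleys D) k) => [|r rs]; last first.
  have kr : (k, r) \in valleys D by rewrite -mem_col_rows Ek mem_head.
  have /andP[_ /= lt_kr] := col_lt_row _ kr.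
  by split => [rk | /(_ k r kr) []]; [lia | split => //; exact: ltnW].
have kC : k \notin unzip1 (valleys D) by rewrite -col_rows_nil Ek.
rewrite (no_valley_across hk1 kC) -free_cols_eq_free_rows //.
rewrite (rwP eqP) nth_filter_iota_eq ?subn1 //; last by lia.
rewrite andb_idl // free_cols_eq_free_rows //.
exact: notin_rows_no_valley_across.
Qed.
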